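(* Let $\mathcal{H}$ be a complex Hilbert space and $A,B\in\mathcal{B}(\mathcal{H})$. Then for all $p\geq 1$, \[ \omega^{p}(A^{*}B) \leq \frac{1}{2} \|A\|^{p}\|B\|^{p} + \frac{1}{2} \omega^{p}(BA^{*}). \]
   Context: $\omega(T)=\sup\{|\langle Tx,x\rangle|:x\in\mathcal{H},\|x\|=1\}$ denotes the numerical radius and $\|\cdot\|$ the operator norm. *)

From HB Require Import structures.
From mathcomp Require Import all_boot all_order all_algebra.
From mathcomp Require Import boolp classical_sets reals exp.
From mathcomp Require Import complex.
Set Implicit Arguments. Unset Strict Implicit. Unset Printing Implicit Defensive.
Import Order.TTheory GRing.Theory Num.Theory.
Local Open Scope ring_scope.

Record is_inner_product (R : realType) (V : lmodType R[i]) (ip : V -> V -> R[i]) : Prop := {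
  ip_linear : forall (a : R[i]) (x y z : V), ip (a *: x + y) z = a * ip x z + ip y z;
  ip_conj : forall x y : V, ip y x = conjc (ip x y);
  ip_pos : forall x : V, complex.Im (ip x x) = 0 /\ 0 <= complex.Re (ip x x);
  ip_def : forall x : V, ip x x = 0 -> x = 0
}.

Definition ipnorm (R : realType) (V : lmodType R[i]) (ip : V -> V -> R[i]) (x : V) : R :=
  Num.sqrt (complex.Re (ip x x)).

Definition ip_complete (R : realType) (V : lmodType R[i]) (ip : V -> V -> R[i]) : Prop :=
  forall u : nat -> V,
    (forall e : R, 0 < e -> exists N : nat, forall m n : nat, (N <= m)%N -> (N <= n)%N ->
        ipnorm ip (u m - u n) < e) ->
    exists l : V, forall e : R, 0 < e -> exists N : nat, forall n : nat, (N <= n)%N ->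
        ipnorm ip (u n - l) < e.

Definition is_hilbert (R : realType) (V : lmodType R[i]) (ip : V -> V -> R[i]) : Prop :=
  is_inner_product ip /\ ip_complete ip.

Definition is_bounded_op (R : realType) (V : lmodType R[i]) (ip : V -> V -> R[i])
    (T : V -> V) : Prop :=
  (forall (a : R[i]) (x y : V), T (a *: x + y) = a *: T x + T y) /\
  exists M : R, forall x : V, ipnorm ip (T x) <= M * ipnorm ip x.

Definition is_adjoint (R : realType) (V : lmodType R[i]) (ip : V -> V -> R[i])
    (T S : V -> V) : Prop :=
  forall x y : V, ip (T x) y = ip x (S y).

Definition opnorm (R : realType) (V : lmodType R[i]) (ip : V -> V -> R[i]) (T : V -> V) : R :=
  reals.sup [set r : R | exists x : V, ipnorm ip x = 1 /\ r = ipnorm ip (T x)]%classic.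

Definition numrad (R : realType) (V : lmodType R[i]) (ip : V -> V -> R[i]) (T : V -> V) : R :=
  reals.sup [set r : R | exists x : V, ipnorm ip x = 1 /\ r = Normc.normc (ip (T x) x)]%classic.

From HB Require Import structures.
From mathcomp Require Import all_boot all_order all_algebra.
From mathcomp Require Import boolp classical_sets reals exp.
From mathcomp Require Import complex.
From mathcomp Require Import ring lra.
From mathcomp Require Import interval_inference convex hoelder.
Import Order.TTheory GRing.Theory Num.Theory.
Local Open Scope ring_scope.
Local Open Scope complex_scope.
Set Implicit Arguments. Unset Strict Implicit.

(* For unit vectors x, y put w := A† y and d := <w, x> = <y, A x>, so that
   <B x, y> <y, A x> = <B (d x), y>.  Now 2 d x = w + r, where r := 2 <w, x> x - w
   is the reflection of w in the line through x, hence ||r|| = ||w|| <= ||A||, and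
   2 |<B x, y> <y, A x>| <= |<B A† y, y>| + ||B|| ||r|| <= w(B A†) + ||A|| ||B||.
   For y := B x / ||B x|| the left-hand side is 2 |<B x, A x>| = 2 |<A† B x, x>|,
   so w(A† B) <= (||A|| ||B|| + w(B A†)) / 2. *)

Lemma powR_midpoint_le (R : realType) (p s t : R) : 1 <= p -> 0 <= s -> 0 <= t ->
  (2^-1 * s + 2^-1 * t) `^ p <= 2^-1 * s `^ p + 2^-1 * t `^ p.
Proof.
move=> p1 s0 t0; rewrite {2 4}(_ : 2^-1 = 1 - 2^-1); last by rewrite {2}(splitr 1) div1r addrK.
apply: (convex_powR p1 (Itv01 _ _)) => //=;
  by rewrite ?inE/= ?in_itv/= ?s0 ?t0 ?invr_ge0 ?invf_le1 ?ler1n.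
Qed.

Lemma sup_ge0 (R : realType) (E : set R) : (forall r, E r -> 0 <= r) -> 0 <= sup E.
Proof.
move=> E_ge0; have [supE|/sup_out->//] := pselect (has_sup E).
have [[r Er] ubE] := supE.
by rewrite (le_trans (E_ge0 r Er)) // ub_le_sup.
Qed.

Lemma ge0_ge_sup (R : realType) (E : set R) (M : R) : 0 <= M -> ubound E M -> sup E <= M.
Proof.
move=> M_ge0 ubM; have [->|E0] := eqVneq E set0; first by rewrite sup0.
by apply: ge_sup => //; apply/set0P.
Qed.

Section ComplexNorm.
Variable R : realType.
Implicit Types z : R[i].
Local Notation normc := (@Normc.normc R).

Lemma normc_ge0 z : 0 <= normc z.
Proof. by case: z => a b; rewrite /Normc.normc sqrtr_ge0. Qed.

Lemma normc_real (r : R) : normc r%:C = `|r|.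
Proof. by rewrite /Normc.normc /= expr0n /= addr0 sqrtr_sqr. Qed.

Lemma mulc_conj z : z * conjc z = (normc z ^+ 2)%:C.
Proof.
case: z => a b; rewrite /Normc.normc sqr_sqrtr ?addr_ge0 ?sqr_ge0 //.
by simpc; rewrite (mulrC b a) addNr !expr2.
Qed.

Lemma Re_le_normc z : complex.Re z <= normc z.
Proof.
case: z => a b; rewrite /Normc.normc /= (le_trans (ler_norm a)) // -sqrtr_sqr.
by rewrite ler_sqrt ?addr_ge0 ?sqr_ge0 // lerDl sqr_ge0.
Qed.

End ComplexNorm.

Section InnerProduct.
Variables (R : realType) (V : lmodType R[i]) (ip : V -> V -> R[i]).
Hypothesis ipP : is_inner_product ip.
Local Notation normc := (@Normc.normc R).
Local Notation "`‖ x ‖" := (ipnorm ip x) (format "`‖ x ‖").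

Lemma ipDl x y z : ip (x + y) z = ip x z + ip y z.
Proof. by have := ip_linear ipP 1 x y z; rewrite scale1r mul1r. Qed.

Lemma ip0l z : ip 0 z = 0.
Proof. by apply: (@addrI _ (ip 0 z)); rewrite -ipDl !addr0. Qed.

Lemma ipZl a x z : ip (a *: x) z = a * ip x z.
Proof. by have := ip_linear ipP a x 0 z; rewrite addr0 ip0l addr0. Qed.

Lemma ipNl x z : ip (- x) z = - ip x z.
Proof. by rewrite -scaleN1r ipZl mulN1r. Qed.

Lemma ipBl x y z : ip (x - y) z = ip x z - ip y z.
Proof. by rewrite ipDl ipNl. Qed.

Lemma ipDr x y z : ip z (x + y) = ip z x + ip z y.
Proof. by rewrite !(ip_conj ipP _ z) ipDl rmorphD. Qed.

Lemma ipZr a x z : ip z (a *: x) = conjc a * ip z x.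
Proof. by rewrite !(ip_conj ipP _ z) ipZl rmorphM. Qed.

Lemma ipNr x z : ip z (- x) = - ip z x.
Proof. by rewrite -scaleN1r ipZr rmorphN rmorph1 mulN1r. Qed.

Lemma ipBr x y z : ip z (x - y) = ip z x - ip z y.
Proof. by rewrite ipDr ipNr. Qed.

Lemma ip0r z : ip z 0 = 0.
Proof. by rewrite -(scale0r 0) ipZr rmorph0 mul0r. Qed.

Lemma ipnorm_ge0 x : 0 <= `‖x‖.
Proof. exact: sqrtr_ge0. Qed.

Lemma ip_self x : ip x x = (`‖x‖ ^+ 2)%:C.
Proof.
have [Im0 Re_ge0] := ip_pos ipP x.
by rewrite /ipnorm sqr_sqrtr //; case: (ip x x) Im0 => a b /= ->.
Qed.

Lemma ipnorm_eq0 x : `‖x‖ = 0 -> x = 0.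
Proof. by move=> x0; apply: (ip_def ipP); rewrite ip_self x0 expr0n. Qed.

Lemma ipnorm0 : `‖0‖ = 0.
Proof. by rewrite /ipnorm ip0l sqrtr0. Qed.

Lemma ipnormZ a x : `‖a *: x‖ = normc a * `‖x‖.
Proof.
rewrite [LHS]/ipnorm ipZl ipZr mulrA mulc_conj ip_self -rmorphM /= -exprMn.
by rewrite sqrtr_sqr ger0_norm // mulr_ge0 ?normc_ge0 ?ipnorm_ge0.
Qed.

Lemma ipnorm_normalize x : `‖x‖ != 0 -> `‖(`‖x‖^-1)%:C *: x‖ = 1.
Proof.
move=> x0; rewrite ipnormZ normc_real ger0_norm ?invr_ge0 ?ipnorm_ge0 //.
exact: mulVf.
Qed.

Lemma cauchy_schwarz x y : normc (ip x y) <= `‖x‖ * `‖y‖.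
Proof.
have [/ipnorm_eq0->|y0] := eqVneq `‖y‖ 0; first by rewrite ip0r Normc.normc0 ipnorm0 mulr0.
pose c := ip x y; pose t := `‖y‖ ^+ 2; pose z := t%:C *: x - c *: y.
have Ez : ip z z = t%:C * (t%:C * (`‖x‖ ^+ 2)%:C - c * conjc c).
  rewrite !ipBl !ipZl !ipBr !ipZr !ip_self -/t (ip_conj ipP x y) -/c conjc_real.
  by ring.
rewrite mulc_conj -rmorphM -rmorphB -rmorphM ip_self in Ez.
have : 0 <= t * (t * `‖x‖ ^+ 2 - normc c ^+ 2).
  by move/(congr1 (@complex.Re R)): Ez => /= <-; exact: sqr_ge0.
rewrite pmulr_rge0 ?exprn_gt0 ?lt_neqAle 1?eq_sym ?y0 ?ipnorm_ge0 // subr_ge0 mulrC -exprMn.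
by rewrite ler_sqr ?nnegrE ?normc_ge0 ?mulr_ge0 ?ipnorm_ge0.
Qed.

Lemma ipnorm_reflect x w : `‖x‖ = 1 -> `‖(ip w x *+ 2) *: x - w‖ = `‖w‖.
Proof.
move=> x1; rewrite [LHS]/ipnorm [RHS]/ipnorm; congr (Num.sqrt (complex.Re _)).
rewrite !ipBl !ipZl !ipBr !ipZr ip_self x1 expr1n (ip_conj ipP w x) rmorphMn /=.
by rewrite mulr2n; ring.
Qed.

Section LinearMap.
Variable T : V -> V.
Hypothesis T_linear : forall (a : R[i]) (x y : V), T (a *: x + y) = a *: T x + T y.

Lemma linmap0 : T 0 = 0.
Proof.
have := T_linear 1 0 0; rewrite scaler0 addr0 scale1r => T0.
by apply: (@addrI _ (T 0)); rewrite addr0 -T0.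
Qed.

Lemma linmapZ a x : T (a *: x) = a *: T x.
Proof. by have := T_linear a x 0; rewrite !addr0 linmap0 addr0. Qed.

Lemma linmapD x y : T (x + y) = T x + T y.
Proof. by have := T_linear 1 x y; rewrite !scale1r. Qed.

End LinearMap.
Arguments linmap0 {T}.
Arguments linmapZ {T}.
Arguments linmapD {T}.

Lemma opnorm_ge0 T : 0 <= opnorm ip T.
Proof. by apply: sup_ge0 => _ [x [_ ->]]; exact: ipnorm_ge0. Qed.

Lemma numrad_ge0 T : 0 <= numrad ip T.
Proof. by apply: sup_ge0 => _ [x [_ ->]]; exact: normc_ge0. Qed.

Lemma ipnorm_op_le T z : is_bounded_op ip T -> `‖T z‖ <= opnorm ip T * `‖z‖.
Proof.
move=> [T_linear [M TM]].
have [/ipnorm_eq0->|z0] := eqVneq `‖z‖ 0.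
  by rewrite (linmap0 T_linear) ipnorm0 mulr0.
pose s := `‖z‖; have s_gt0 : 0 < s by rewrite lt_neqAle eq_sym z0 ipnorm_ge0.
have : `‖T ((s^-1)%:C *: z)‖ <= opnorm ip T.
  apply: ub_le_sup; last by exists ((s^-1)%:C *: z); rewrite ipnorm_normalize.
  by exists M => _ [x [x1 ->]]; rewrite (le_trans (TM x)) // x1 mulr1.
rewrite (linmapZ T_linear) ipnormZ normc_real ger0_norm ?invr_ge0 ?(ltW s_gt0) //.
by rewrite mulrC ler_pdivrMr.
Qed.

Lemma numrad_ub T M y : (forall z, `‖z‖ = 1 -> normc (ip (T z) z) <= M) ->
  `‖y‖ = 1 -> normc (ip (T y) y) <= numrad ip T.
Proof.
move=> TM y1; apply: ub_le_sup; last by exists y.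
by exists M => _ [z [z1 ->]]; exact: TM.
Qed.

Lemma numrad_le T M : 0 <= M -> (forall z, `‖z‖ = 1 -> normc (ip (T z) z) <= M) ->
  numrad ip T <= M.
Proof. by move=> M_ge0 TM; apply: ge0_ge_sup => // _ [z [z1 ->]]; exact: TM. Qed.

Section Adjoint.
Variables A Astar B : V -> V.
Hypotheses (A_bounded : is_bounded_op ip A) (B_bounded : is_bounded_op ip B).
Hypothesis adjA : is_adjoint ip A Astar.

Lemma ipnorm_adjoint_le y : `‖Astar y‖ <= opnorm ip A * `‖y‖.
Proof.
pose w := Astar y.
have : `‖w‖ ^+ 2 <= opnorm ip A * `‖w‖ * `‖y‖.
  have /(congr1 (@complex.Re R)) /= <- := ip_self w.
  rewrite {2}/w -adjA (le_trans (Re_le_normc _)) // (le_trans (cauchy_schwarz _ _)) //.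
  by rewrite ler_wpM2r ?ipnorm_ge0 ?ipnorm_op_le.
have [->|w0] := eqVneq `‖w‖ 0; first by rewrite mulr_ge0 ?opnorm_ge0 ?ipnorm_ge0.
by rewrite expr2 -mulrA mulrCA ler_pM2l // lt_neqAle eq_sym w0 ipnorm_ge0.
Qed.

Lemma normc_ip_BAstar_le z : `‖z‖ = 1 -> normc (ip (B (Astar z)) z) <= opnorm ip B * opnorm ip A.
Proof.
move=> z1; rewrite (le_trans (cauchy_schwarz _ _)) // z1 mulr1.
rewrite (le_trans (ipnorm_op_le _ B_bounded)) // ler_wpM2l ?opnorm_ge0 //.
by rewrite (le_trans (ipnorm_adjoint_le z)) // z1 mulr1.
Qed.

Lemma normc_ipB_ipA_le x y : `‖x‖ = 1 -> `‖y‖ = 1 ->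
  normc (ip (B x) y * ip y (A x)) *+ 2 <= opnorm ip A * opnorm ip B + numrad ip (B \o Astar).
Proof.
move=> x1 y1; have [B_linear _] := B_bounded.
pose w := Astar y; pose d := ip w x; pose r := (d *+ 2) *: x - w.
have -> : ip (B x) y * ip y (A x) = ip (B (d *: x)) y.
  rewrite (linmapZ B_linear) ipZl mulrC; congr (_ * _).
  by rewrite (ip_conj ipP (A x) y) adjA /d (ip_conj ipP x w).
have B_split : ip (B (d *: x)) y *+ 2 = ip (B w) y + ip (B r) y.
  by rewrite mulr2n -!ipDl -!(linmapD B_linear) -scalerDl -mulr2n /r addrC subrK.
have Bw_le : normc (ip (B w) y) <= numrad ip (B \o Astar).
  exact: numrad_ub normc_ip_BAstar_le y1.
have Br_le : normc (ip (B r) y) <= opnorm ip B * opnorm ip A.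
  rewrite (le_trans (cauchy_schwarz _ _)) // y1 mulr1.
  rewrite (le_trans (ipnorm_op_le _ B_bounded)) // ipnorm_reflect //.
  by rewrite ler_wpM2l ?opnorm_ge0 // (le_trans (ipnorm_adjoint_le y)) // y1 mulr1.
by rewrite -normcMn B_split (le_trans (le_normcD _ _)) // addrC mulrC lerD.
Qed.

Lemma normc_ip_AstarB_le x : `‖x‖ = 1 ->
  normc (ip (Astar (B x)) x) *+ 2 <= opnorm ip A * opnorm ip B + numrad ip (B \o Astar).
Proof.
move=> x1.
have -> : ip (Astar (B x)) x = ip (B x) (A x).
  by rewrite (ip_conj ipP x) -adjA (ip_conj ipP (B x)) conjcK.
have [/ipnorm_eq0->|Bx0] := eqVneq `‖B x‖ 0.
  by rewrite ip0l Normc.normc0 mul0rn addr_ge0 ?mulr_ge0 ?opnorm_ge0 ?numrad_ge0.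
pose y := (`‖B x‖^-1)%:C *: B x.
have -> : ip (B x) (A x) = ip (B x) y * ip y (A x).
  rewrite /y ipZr ipZl conjc_real ip_self fmorphV rmorphXn /=; field.
  by rewrite fmorph_eq0.
exact: normc_ipB_ipA_le x1 (ipnorm_normalize Bx0).
Qed.

Lemma numrad_AstarB_le :
  numrad ip (Astar \o B) <= 2^-1 * (opnorm ip A * opnorm ip B) + 2^-1 * numrad ip (B \o Astar).
Proof.
apply: numrad_le => [|z z1 /=].
  by rewrite addr_ge0 ?mulr_ge0 ?invr_ge0 ?opnorm_ge0 ?numrad_ge0.
by have := normc_ip_AstarB_le z1; rewrite mulr2n; lra.
Qed.

End Adjoint.

End InnerProduct.

Theorem mainTheorem5 (R : realType) (V : lmodType R[i]) (ip : V -> V -> R[i])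
  (A B Astar : V -> V) (p : R) :
  is_hilbert ip ->
  is_bounded_op ip A -> is_bounded_op ip B ->
  is_adjoint ip A Astar ->
  1 <= p ->
  numrad ip (Astar \o B) `^ p <=
    2^-1 * (opnorm ip A `^ p * opnorm ip B `^ p) + 2^-1 * numrad ip (B \o Astar) `^ p.
Proof.
move=> [ipP _] A_bounded B_bounded adjA p1.
rewrite -powRM ?opnorm_ge0 //.
apply: (le_trans _ (powR_midpoint_le p1 _ _)); rewrite ?mulr_ge0 ?opnorm_ge0 ?numrad_ge0 //.
apply: ge0_ler_powR; first by rewrite (le_trans _ p1).
- by rewrite nnegrE numrad_ge0.
- by rewrite nnegrE addr_ge0 ?mulr_ge0 ?invr_ge0 ?opnorm_ge0 ?numrad_ge0.
exact: (numrad_AstarB_le ipP).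
Qed.
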